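(* Let $C_t\subseteq\mathbb{R}^d$, $t=1,2,\dots$, be closed convex sets and $\ell_t:\mathbb{R}^d\to\mathbb{R}$ convex losses, with $g_t$ a subgradient selection of $\ell_t$ used by the algorithm. Suppose that for each $t$: $\ell_t$ is $L$-Lipschitz, $\ell_t$ is $(h_t,0)$-restorative, and the pair $(\ell_t,C_t)$ satisfies inward flow. Then the hidden iterates of lazy gradient descent with learning rate $\eta>0$ satisfy, for every $T\ge1$, $$\|\tilde\theta_{T+1}\|_2\le\sqrt{\|\tilde\theta_1\|_2^2+\eta^2L^2T+2\eta L\sum_{t=1}^T h_t}.$$ If moreover $(h_t)$ is nondecreasing, then $$\Bigg\|\frac1T\sum_{t=1}^T g_t(\theta_t)\Bigg\|_2\le\frac{2\|\tilde\theta_1\|_2}{\eta T}+\sqrt{\frac{L^2}{T}+\frac{2Lh_T}{\eta T}},$$ which tends to $0$ as $T\to\infty$ whenever $h_t$ is sublinear in $t$.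
   Context: Lazy gradient descent: given $\tilde\theta_1\in C_1$ and $\eta>0$, for $t=1,2,\dots$ set $\theta_t=\Pi_{C_t}(\tilde\theta_t)$ (Euclidean projection) and $\tilde\theta_{t+1}=\tilde\theta_t-\eta g_t(\theta_t)$. A loss $\ell$ is $L$-Lipschitz if all its subgradients $g$ satisfy $\|g(\theta)\|_2\le L$ for all $\theta$. For $h\ge0$ and a nonnegative function $\phi$, $\ell$ is $(h,\phi)$-restorative if all its subgradients $g$ satisfy $\langle\theta,g(\theta)\rangle\ge\phi(\theta)$ whenever $\|\theta\|_2>h$. A pair $(\ell,C)$ with $C$ closed convex and $g$ the (sub)gradient of $\ell$ satisfies inward flow if $-g(\theta)\in T_C(\theta)$ for all $\theta$ on the boundary of $C$, where $T_C(x)=\mathrm{cl}\{y:\exists\beta>0\text{ with }x+\varepsilon y\in C\ \forall\varepsilon\in[0,\beta]\}$ is the tangent cone. *)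

From HB Require Import structures.
From mathcomp Require Import all_boot all_order all_algebra.
From mathcomp Require Import all_classical all_reals all_analysis.
Set Implicit Arguments. Unset Strict Implicit. Unset Printing Implicit Defensive.
Import Order.TTheory GRing.Theory Num.Theory.
Import numFieldNormedType.Exports.
Local Open Scope classical_set_scope.
Local Open Scope ring_scope.

(* Vectors of R^d are row vectors 'rV[R]_d, with the (product) topology of
   mathcomp-analysis, which coincides with the Euclidean topology. *)
Section Defs.
Variables (R : realType) (d : nat).
Notation V := 'rV[R]_d.

Definition dotp (u v : V) : R := \sum_(i < d) u ord0 i * v ord0 i.
Definition norm2 (u : V) : R := Num.sqrt (dotp u u).

Definition convex_fun (f : V -> R) : Prop :=
  forall x y a, 0 <= a -> a <= 1 -> f (a *: x + (1 - a) *: y) <= a * f x + (1 - a) * f y.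

Definition is_subgradient (f : V -> R) (x v : V) : Prop :=
  forall y, f x + dotp v (y - x) <= f y.

Definition subgradient_selection (f : V -> R) (g : V -> V) : Prop :=
  forall x, is_subgradient f x (g x).

Definition lipschitz_loss (f : V -> R) (L : R) : Prop :=
  forall x v, is_subgradient f x v -> norm2 v <= L.

Definition restorative (f : V -> R) (h : R) (phi : V -> R) : Prop :=
  forall x v, is_subgradient f x v -> h < norm2 x -> phi x <= dotp x v.

Definition tangent_cone (C : set V) (x : V) : set V :=
  closure [set y | exists2 beta : R, 0 < beta &
            forall eps : R, 0 <= eps -> eps <= beta -> C (x + eps *: y)].

Definition boundary (C : set V) : set V := closure C `\` interior C.

(* inward flow for (f, C), with g the (sub)gradient of f *)
Definition inward_flow (g : V -> V) (C : set V) : Prop :=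
  forall x, boundary C x -> tangent_cone C x (- g x).

Definition is_projection (C : set V) (x p : V) : Prop :=
  C p /\ forall y, C y -> norm2 (x - p) <= norm2 (x - y).

End Defs.

From HB Require Import structures.
From mathcomp Require Import all_boot all_order all_algebra.
From mathcomp Require Import all_classical all_reals all_analysis.
From mathcomp Require Import ring lra.
Import Order.TTheory GRing.Theory Num.Theory.
Import numFieldNormedType.Exports.
Local Open Scope classical_set_scope.
Local Open Scope ring_scope.
Set Implicit Arguments. Unset Strict Implicit.

(* Expanding the step gives
     |thetat_{t+1}|^2 = |thetat_t|^2 - 2 eta <thetat_t, g_t> + eta^2 |g_t|^2,
   so everything rests on the lower bound <thetat_t, g_t> >= - h_t L, where
   g_t is the subgradient at the projection theta_t.  Split
   thetat_t = theta_t + (thetat_t - theta_t).  Restorativity gives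
   <theta_t, g_t> >= 0 when |theta_t| > h_t, and Cauchy-Schwarz gives
   >= - h_t L otherwise.  If thetat_t <> theta_t, the projection lies on the
   boundary of C_t and the normal thetat_t - theta_t makes a nonpositive inner
   product with every direction of the tangent cone, in particular with
   - g_t by inward flow; hence <thetat_t - theta_t, g_t> >= 0.  Summing gives
   the first bound; the gradients telescope to
   (thetat_1 - thetat_{T+1}) / eta, which gives the second. *)

Section EuclideanGeometry.
Variables (R : realType) (d : nat).
Local Notation V := 'rV[R]_d.
Implicit Types (u v w : V) (a : R).

Lemma dotpC u v : dotp u v = dotp v u.
Proof. by apply: eq_bigr => i _; rewrite mulrC. Qed.

Lemma dotpDl u w v : dotp (u + w) v = dotp u v + dotp w v.
Proof. by rewrite /dotp -big_split; apply: eq_bigr => i _; rewrite mxE mulrDl. Qed.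

Lemma dotpZl a u v : dotp (a *: u) v = a * dotp u v.
Proof. by rewrite /dotp mulr_sumr; apply: eq_bigr => i _; rewrite mxE mulrA. Qed.

Lemma dotpNl u v : dotp (- u) v = - dotp u v.
Proof. by rewrite -scaleN1r dotpZl mulN1r. Qed.

Lemma dotpBl u w v : dotp (u - w) v = dotp u v - dotp w v.
Proof. by rewrite dotpDl dotpNl. Qed.

Lemma dotp0l v : dotp 0 v = 0.
Proof. by rewrite -(scale0r 0) dotpZl mul0r. Qed.

Lemma dotpDr u v w : dotp u (v + w) = dotp u v + dotp u w.
Proof. by rewrite dotpC dotpDl !(dotpC u). Qed.

Lemma dotpZr a u v : dotp u (a *: v) = a * dotp u v.
Proof. by rewrite dotpC dotpZl dotpC. Qed.

Lemma dotpNr u v : dotp u (- v) = - dotp u v.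
Proof. by rewrite dotpC dotpNl dotpC. Qed.

Lemma dotpBr u v w : dotp u (v - w) = dotp u v - dotp u w.
Proof. by rewrite dotpDr dotpNr. Qed.

Lemma dotpp_ge0 u : 0 <= dotp u u.
Proof. by apply: sumr_ge0 => i _; rewrite -expr2 sqr_ge0. Qed.

Lemma dotpp_eq0 u : dotp u u = 0 -> u = 0.
Proof.
move=> /eqP; rewrite psumr_eq0 => [/allP u0|i _]; last by rewrite -expr2 sqr_ge0.
apply/matrixP => i j; rewrite mxE (ord1 i).
by have /u0 := mem_index_enum j; rewrite /= mulf_eq0 orbb => /eqP.
Qed.

Lemma dotp_continuous u : continuous (dotp u).
Proof.
apply: continuous_big => [|i _]; first exact: add_continuous.
by move=> x; apply: continuousM; [exact: cst_continuous | exact: coord_continuous].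
Qed.

Lemma norm2_ge0 u : 0 <= norm2 u.
Proof. exact: sqrtr_ge0. Qed.

Lemma sqr_norm2 u : norm2 u ^+ 2 = dotp u u.
Proof. by rewrite sqr_sqrtr // dotpp_ge0. Qed.

Lemma norm2_eq0 u : (norm2 u == 0) = (u == 0).
Proof.
apply/eqP/eqP => [u0|->]; last by rewrite /norm2 dotp0l sqrtr0.
by apply: dotpp_eq0; rewrite -sqr_norm2 u0 expr0n.
Qed.

Lemma norm2Z a u : norm2 (a *: u) = `|a| * norm2 u.
Proof.
by rewrite /norm2 dotpZl dotpZr mulrA -expr2 sqrtrM ?sqr_ge0 // sqrtr_sqr.
Qed.

Lemma sqr_norm2BZ u v a :
  norm2 (u - a *: v) ^+ 2 = norm2 u ^+ 2 - 2 * a * dotp u v + a ^+ 2 * norm2 v ^+ 2.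
Proof. by rewrite !sqr_norm2 !(dotpBl, dotpBr, dotpZl, dotpZr) (dotpC v u); ring. Qed.

Lemma dotp_le_norm2M u v : dotp u v <= norm2 u * norm2 v.
Proof.
set x := norm2 u; set y := norm2 v.
have [x0|x_neq0] := eqVneq x 0.
  by move/eqP: (x0); rewrite norm2_eq0 => /eqP ->; rewrite dotp0l x0 mul0r.
have [y0|y_neq0] := eqVneq y 0.
  by move/eqP: (y0); rewrite norm2_eq0 => /eqP ->; rewrite dotpC dotp0l y0 mulr0.
have xy_gt0 : 0 < x * y by rewrite mulr_gt0 // lt_def ?x_neq0 ?y_neq0 norm2_ge0.
have := dotpp_ge0 (y *: u - x *: v).
rewrite !(dotpBl, dotpBr, dotpZl, dotpZr) -!sqr_norm2 -/x -/y (dotpC v u).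
nra.
Qed.

Lemma norm2N u : norm2 (- u) = norm2 u.
Proof. by rewrite -scaleN1r norm2Z normrN1 mul1r. Qed.

Lemma dotp_ge_norm2M u v : - (norm2 u * norm2 v) <= dotp u v.
Proof. by rewrite lerNl -dotpNl -(norm2N u) dotp_le_norm2M. Qed.

Lemma ler_norm2B u v : norm2 (u - v) <= norm2 u + norm2 v.
Proof.
rewrite -(@ler_pXn2r _ 2) ?nnegrE ?addr_ge0 ?norm2_ge0 //.
rewrite -[v in u - v]scale1r sqr_norm2BZ.
have := dotp_le_norm2M u v; have := dotp_ge_norm2M u v; nra.
Qed.

End EuclideanGeometry.

Section Projection.
Variables (R : realType) (d : nat).
Local Notation V := 'rV[R]_d.
Variables (C : set V) (x p : V).
Hypothesis projCxp : is_projection C x p.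

Lemma projection_boundary : x != p -> boundary C p.
Proof.
move=> xNp; split; first exact/subset_closure/projCxp.1.
set n := x - p.
have n_gt0 : 0 < norm2 n by rewrite lt_def norm2_ge0 norm2_eq0 subr_eq0 xNp.
(* Balls are taken for the sup norm [`|n|] that defines the topology of row
   vectors; the point [p + e *: n] of such a ball is strictly closer to [x]. *)
move=> /nbhs_ballP [r /= r_gt0 ballC].
pose e := r / (2 * (`|n| + r)).
have nr_gt0 : 0 < `|n| + r by rewrite ltr_wpDl.
have e_gt0 : 0 < e by rewrite divr_gt0 // mulr_gt0.
have e_lt1 : e < 1.
  by rewrite ltr_pdivrMr ?mulr_gt0 // mul1r; have := normr_ge0 n; lra.
have : C (p + e *: n).
  apply: ballC; rewrite -ball_normE /ball_ /= opprD addrA subrr sub0r normrN.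
  rewrite normrZ gtr0_norm // /e mulrAC ltr_pdivrMr ?mulr_gt0 //.
  by have := normr_ge0 n; nra.
move/projCxp.2; rewrite (_ : x - (p + e *: n) = (1 - e) *: n); last first.
  by rewrite scalerBl scale1r /n opprD addrA.
by rewrite norm2Z ger0_norm; nra.
Qed.

Lemma tangent_cone_projection :
  tangent_cone C p `<=` [set y | dotp (x - p) y <= 0].
Proof.
have halfspace_closed : closed [set y | dotp (x - p) y <= 0].
  exact: (continuous_closedP _).1 (@dotp_continuous _ _ (x - p)) _ (@closed_le _ 0).
rewrite ((closure_id _).1 halfspace_closed); apply: closure_subset.
(* If [<x - p, y> > 0], then [p + e *: y] is strictly closer to [x] for small
   [e > 0], as the first-order decrease [2 e <x - p, y>] beats [e^2 |y|^2]. *)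
move=> y [beta beta_gt0 segC] /=; rewrite leNgt; apply/negP => c_gt0.
set c := dotp (x - p) y in c_gt0.
pose e := Order.min beta (c / (norm2 y ^+ 2 + 1)).
have yy_ge0 : 0 <= norm2 y ^+ 2 by rewrite sqr_ge0.
have e_gt0 : 0 < e by rewrite lt_min beta_gt0 divr_gt0 //; lra.
have e_small : e * (norm2 y ^+ 2 + 1) <= c.
  by rewrite -ler_pdivlMr ?ge_min ?lexx ?orbT //; lra.
have e_le_beta : e <= beta by rewrite ge_min lexx.
have := projCxp.2 _ (segC e (ltW e_gt0) e_le_beta).
rewrite -(@ler_pXn2r _ 2) ?nnegrE ?norm2_ge0 //.
rewrite (_ : x - (p + e *: y) = x - p - e *: y) ?sqr_norm2BZ; last first.
  by rewrite opprD addrA.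
rewrite -/c; nra.
Qed.

Lemma projection_dotp_ge0 v :
  (boundary C p -> tangent_cone C p (- v)) -> 0 <= dotp (x - p) v.
Proof.
move=> inward; have [->|xNp] := eqVneq x p; first by rewrite subrr dotp0l.
have := tangent_cone_projection (inward (projection_boundary xNp)).
by rewrite /= dotpNr oppr_le0.
Qed.

End Projection.

Lemma sqrtrD_sqr_le (R : rcfType) (a b : R) :
  0 <= a -> 0 <= b -> Num.sqrt (a ^+ 2 + b) <= a + Num.sqrt b.
Proof.
move=> a_ge0 b_ge0; have s_ge0 := sqrtr_ge0 b.
rewrite -(ger0_norm (addr_ge0 a_ge0 s_ge0)) -sqrtr_sqr ler_sqrt ?sqr_ge0 //.
by have := sqr_sqrtr b_ge0; nra.
Qed.

Lemma lazy_step_dotp_ge (R : realType) (d : nat) (f : 'rV[R]_d -> R)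
    (g : 'rV[R]_d -> 'rV[R]_d) (C : set 'rV[R]_d) (L h : R) (x p : 'rV[R]_d) :
  subgradient_selection f g -> lipschitz_loss f L ->
  0 <= h -> restorative f h (fun _ => 0) -> inward_flow g C ->
  is_projection C x p -> - (h * L) <= dotp x (g p).
Proof.
move=> sel lip h_ge0 rest inward projCxp.
have gp_le : norm2 (g p) <= L := lip _ _ (sel p).
have L_ge0 : 0 <= L := le_trans (norm2_ge0 _) gp_le.
have normal_ge0 := projection_dotp_ge0 projCxp (inward p).
suff : - (h * L) <= dotp p (g p) by rewrite -[x](subrK p) dotpDl; lra.
have [h_lt|p_le] := ltP h (norm2 p).
  by have := rest _ _ (sel p) h_lt; have := mulr_ge0 h_ge0 L_ge0; lra.
apply: le_trans (dotp_ge_norm2M _ _); rewrite lerN2.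
exact: ler_pM (norm2_ge0 _) (norm2_ge0 _) p_le gp_le.
Qed.

Section LazyGradientDescent.
Variables (R : realType) (d : nat).
Variables (thetat v : nat -> 'rV[R]_d) (eta L : R) (h : nat -> R).
Hypothesis eta_gt0 : 0 < eta.
Hypothesis thetatS : forall t, (0 < t)%N -> thetat t.+1 = thetat t - eta *: v t.
Hypothesis norm2_v_le : forall t, (0 < t)%N -> norm2 (v t) <= L.
Hypothesis dotp_v_ge : forall t, (0 < t)%N -> - (h t * L) <= dotp (thetat t) (v t).

Let L_ge0 : 0 <= L := le_trans (norm2_ge0 _) (norm2_v_le (ltn0Sn 0)).

Lemma sqr_norm2_thetat_le T :
  norm2 (thetat T.+1) ^+ 2 <= norm2 (thetat 1) ^+ 2 + eta ^+ 2 * L ^+ 2 * T%:R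
                              + 2 * eta * L * \sum_(1 <= t < T.+1) h t.
Proof.
elim: T => [|T IH]; first by rewrite big_geq // !mulr0 !addr0.
rewrite thetatS // sqr_norm2BZ big_nat_recr //= -natr1.
have v_le : eta ^+ 2 * norm2 (v T.+1) ^+ 2 <= eta ^+ 2 * L ^+ 2.
  by rewrite ler_wpM2l ?sqr_ge0 // ler_pXn2r ?nnegrE ?norm2_ge0 ?norm2_v_le.
have cross_le : - (2 * eta * (h T.+1 * L)) <= 2 * eta * dotp (thetat T.+1) (v T.+1).
  by rewrite -mulrN ler_wpM2l ?dotp_v_ge // mulr_ge0 // ltW.
by move: IH v_le cross_le; nra.
Qed.

Lemma norm2_thetat_le T :
  norm2 (thetat T.+1) <= Num.sqrt (norm2 (thetat 1) ^+ 2 + eta ^+ 2 * L ^+ 2 * T%:R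
                                   + 2 * eta * L * \sum_(1 <= t < T.+1) h t).
Proof.
rewrite -[norm2 _]ger0_norm ?norm2_ge0 // -sqrtr_sqr.
exact/ler_wsqrtr/sqr_norm2_thetat_le.
Qed.

Lemma scaler_sum_steps T :
  eta *: \sum_(1 <= t < T.+1) v t = thetat 1 - thetat T.+1.
Proof.
elim: T => [|T IH]; first by rewrite big_geq // scaler0 subrr.
by rewrite big_nat_recr //= scalerDr IH (thetatS (ltn0Sn T)) opprD opprK addrA.
Qed.

Section NondecreasingRadii.
Hypothesis h_nondecreasing : forall s t, (0 < s)%N -> (s <= t)%N -> h s <= h t.
Variable T : nat.
Hypotheses (T_gt0 : (0 < T)%N) (hT_ge0 : 0 <= h T).

Let B := eta ^+ 2 * L ^+ 2 * T%:R + 2 * eta * L * (T%:R * h T).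

Let B_ge0 : 0 <= B.
Proof. by rewrite addr_ge0 // !mulr_ge0 // ltW. Qed.

Lemma norm2_thetat_le_last : norm2 (thetat T.+1) <= norm2 (thetat 1) + Num.sqrt B.
Proof.
have sum_h_le : \sum_(1 <= t < T.+1) h t <= T%:R * h T.
  apply: le_trans (ler_sum_nat (G := fun=> h T) _) _.
    by move=> t /andP [t_gt0 tT]; exact: h_nondecreasing.
  by rewrite sumr_const_nat subSS subn0 mulr_natl.
apply: le_trans (norm2_thetat_le T) _; apply: le_trans (sqrtrD_sqr_le (norm2_ge0 _) B_ge0).
by apply: ler_wsqrtr; rewrite -addrA lerD2l lerD2l ler_wpM2l // !mulr_ge0 // ltW.
Qed.

Lemma norm2_avg_le :
  norm2 (T%:R^-1 *: \sum_(1 <= t < T.+1) v t) <=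
    2 * norm2 (thetat 1) / (eta * T%:R)
    + Num.sqrt (L ^+ 2 / T%:R + 2 * L * h T / (eta * T%:R)).
Proof.
have etaT_gt0 : 0 < eta * T%:R by rewrite mulr_gt0 // ltr0n.
have -> : T%:R^-1 *: \sum_(1 <= t < T.+1) v t
          = (eta * T%:R)^-1 *: (thetat 1 - thetat T.+1).
  by rewrite -scaler_sum_steps scalerA invfM mulrAC mulVf ?gt_eqF // mul1r.
have -> : L ^+ 2 / T%:R + 2 * L * h T / (eta * T%:R) = B * (eta * T%:R)^-1 ^+ 2.
  by rewrite /B; field; rewrite ?gt_eqF // ltr0n.
have etaT_inv_ge0 : 0 <= (eta * T%:R)^-1 by rewrite invr_ge0 ltW.
rewrite norm2Z sqrtrM // sqrtr_sqr !ger0_norm // -mulrDl mulrC ler_wpM2r //.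
apply: le_trans (ler_norm2B _ _) _; have := norm2_thetat_le_last; lra.
Qed.

End NondecreasingRadii.
End LazyGradientDescent.

Lemma avg_bound_cvg0 (R : realType) (a eta L : R) (h : nat -> R) :
  (fun t => h t / t%:R) @ \oo --> 0 ->
  (fun T => 2 * a / (eta * T%:R)
            + Num.sqrt (L ^+ 2 / T%:R + 2 * L * h T / (eta * T%:R))) @ \oo --> 0.
Proof.
move=> h_sublinear.
have inv_cvg0 : (fun T : nat => T%:R^-1 : R) @ \oo --> 0.
  by rewrite -cvg_shiftS; exact: cvg_harmonic.
have -> : (fun T : nat => 2 * a / (eta * T%:R)
            + Num.sqrt (L ^+ 2 / T%:R + 2 * L * h T / (eta * T%:R))) =
    (fun T : nat => T%:R^-1 * (2 * a / eta)
            + Num.sqrt (T%:R^-1 * L ^+ 2 + h T / T%:R * (2 * L / eta))).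
  by apply: funext => T; rewrite !invfM; congr (_ + Num.sqrt _); ring.
rewrite -(_ : 0 * (2 * a / eta) + Num.sqrt (0 * L ^+ 2 + 0 * (2 * L / eta)) = 0); last first.
  by rewrite !mul0r addr0 sqrtr0 addr0.
apply: cvgD; first exact: cvgMr_tmp.
apply: (continuous_cvg _ (h := Num.sqrt)); first exact: sqrt_continuous.
by apply: cvgD; apply: cvgMr_tmp.
Qed.

Theorem proposition5 (R : realType) (d : nat)
    (C : nat -> set 'rV[R]_d) (ell : nat -> 'rV[R]_d -> R)
    (g : nat -> 'rV[R]_d -> 'rV[R]_d) (L eta : R) (h : nat -> R)
    (theta thetat : nat -> 'rV[R]_d) :
  (forall t, (0 < t)%N -> closed (C t) /\ convex_set (C t)) ->
  (forall t, (0 < t)%N -> convex_fun (ell t)) ->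
  (forall t, (0 < t)%N -> subgradient_selection (ell t) (g t)) ->
  (forall t, (0 < t)%N -> lipschitz_loss (ell t) L) ->
  (forall t, (0 < t)%N -> 0 <= h t /\ restorative (ell t) (h t) (fun _ => 0)) ->
  (forall t, (0 < t)%N -> inward_flow (g t) (C t)) ->
  0 < eta ->
  C 1%N (thetat 1%N) ->
  (forall t, (0 < t)%N -> is_projection (C t) (thetat t) (theta t)) ->
  (forall t, (0 < t)%N -> thetat t.+1 = thetat t - eta *: g t (theta t)) ->
  (forall T, (0 < T)%N ->
     norm2 (thetat T.+1) <=
       Num.sqrt (norm2 (thetat 1%N) ^+ 2 + eta ^+ 2 * L ^+ 2 * T%:R
                 + 2 * eta * L * \sum_(1 <= t < T.+1) h t)) /\
  ((forall s t, (0 < s)%N -> (s <= t)%N -> h s <= h t) ->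
     (forall T, (0 < T)%N ->
        norm2 (T%:R^-1 *: \sum_(1 <= t < T.+1) g t (theta t)) <=
          2 * norm2 (thetat 1%N) / (eta * T%:R)
          + Num.sqrt (L ^+ 2 / T%:R + 2 * L * h T / (eta * T%:R)))
     /\
     ((fun t => h t / t%:R) @ \oo --> (0 : R) ->
        (fun T => 2 * norm2 (thetat 1%N) / (eta * T%:R)
          + Num.sqrt (L ^+ 2 / T%:R + 2 * L * h T / (eta * T%:R))) @ \oo --> (0 : R))).
Proof.
move=> _ _ sel lip rest inward eta_gt0 _ proj thetatS.
have norm2_g_le t : (0 < t)%N -> norm2 (g t (theta t)) <= L.
  by move=> t_gt0; exact: lip t t_gt0 _ _ (sel t t_gt0 _).
have dotp_g_ge t : (0 < t)%N -> - (h t * L) <= dotp (thetat t) (g t (theta t)).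
  move=> t_gt0; have [h_ge0 rest_t] := rest t t_gt0.
  exact: lazy_step_dotp_ge (sel t t_gt0) (lip t t_gt0) h_ge0 rest_t (inward t t_gt0)
    (proj t t_gt0).
split=> [T _|h_nondecreasing].
  exact: norm2_thetat_le eta_gt0 thetatS norm2_g_le dotp_g_ge T.
split=> [T T_gt0|]; last exact: avg_bound_cvg0.
exact: (norm2_avg_le eta_gt0 thetatS norm2_g_le dotp_g_ge h_nondecreasing T_gt0
  (rest T T_gt0).1).
Qed.
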